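(* If $\partial\psi\left(C\right)=E^*$ or $C$ is compact, then $\forall a\in C$, the strategy $S\textup{-II}$ (which is Optimistic-MD) enjoys the following dynamic regret upper bound, \begin{equation*} \begin{aligned} \mathrm{Regret}\left(z_1,z_2,\cdots,z_T\right) \leqslant\ &\sum_{t=1}^{T}\frac{1}{\theta_t}\left[B_{\psi}\left(z_t, \widetilde{x}_{t}^\psi\right)-B_{\psi}\left(z_t, \check{x}_{t+1}^\psi\right)\right] \\ &+\sum_{t=1}^{T}\frac{1}{\theta_t}\phi^\star\left(\theta_t\left\lVert x_t^*-\widehat{x}_t^*\right\rVert\right) -\sum_{t=1}^{T}\frac{1}{\theta_t}B_{\psi}\left(x_{t}, \widetilde{x}_{t}^\psi\right), \quad\forall z_t\in C. \end{aligned} \end{equation*}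
   Context: $E$ is a normed vector space over $\mathbb{R}$ with dual $E^*$ and duality pairing $\langle\cdot,\cdot\rangle$; $\star$ denotes the Fenchel conjugate. For a proper function $\psi$, the generalized Bregman divergence is $B_\psi(x,y^* )=\psi(x)+\psi^\star(y^* )-\langle y^*,x\rangle$, and $\partial\psi(x)=\{x^*\in E^*: B_\psi(x,x^* )=0\}$; $\operatorname{gra}$ denotes the graph of a (multivalued) map. $\psi$ is $\phi$-convex if $B_\psi(x,y^* )\geqslant\phi(\lVert x-y\rVert)$ for all $x\in E$ and all $(y,y^* )\in\operatorname{gra}\partial\psi$, where $\phi$ is convex, $\phi\geqslant0$, $\phi(0)=0$. Online setting: $C\neq\varnothing$ is a closed convex subset of $E$; at round $t$ the learner picks $x_t\in C$ and the adversary returns a loss $\varphi_t$ with $\operatorname{dom}\partial\varphi_t\supset C$; $x_t^*\in\partial\varphi_t(x_t)$; $\mathrm{Regret}(z_1,\dots,z_T)=\sum_{t=1}^T\varphi_t(x_t)-\sum_{t=1}^T\varphi_t(z_t)$. Strategy $S\textup{-II}$: $\psi\colon C\to\mathbb{R}$ is $\phi$-convex, $(a,a^\psi)\in\operatorname{gra}\partial\psi$, parameters $\theta_t>0$, estimates $\widehat{x}_t^*\in E^*$ of $x_t^*$; updates $\check{x}_t^\psi=\widetilde{x}_{t-1}^\psi-\theta_{t-1}x_{t-1}^*$, $\widetilde{x}_t\in\partial\psi^\star(\check{x}_t^\psi)$, $\widetilde{x}_t^\psi\in\partial\psi(\widetilde{x}_t)$, $\widetilde{x}_1^\psi=a^\psi$,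 and $x_t\in\partial\psi^\star(\widetilde{x}_t^\psi-\theta_t\widehat{x}_t^* )$. *)

From mathcomp Require Import all_boot all_order all_algebra.
From mathcomp Require Import all_classical all_reals all_analysis.
Import Order.TTheory GRing.Theory Num.Theory.
Import numFieldNormedType.Exports.

Set Implicit Arguments.
Unset Strict Implicit.
Unset Printing Implicit Defensive.

Local Open Scope classical_set_scope.
Local Open Scope ring_scope.

Section Defs.
Context {R : realType} {E : normedModType R}.

(* Elements of the dual E^star : continuous linear functionals E -> R.
   The duality pairing <f, x> is just f x. *)
Definition dual_elt (f : E -> R) : Prop :=
  (forall (a : R) (x y : E), f (a *: x + y) = a * f x + f y) /\ continuous f.

Definition dual_norm (f : E -> R) : R :=
  sup ((fun x => `|f x|) @` [set x : E | `|x| <= 1]).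

(* Fenchel conjugate of psi : C -> R (psi = +oo outside C), evaluated at y in E^star *)
Definition fconj (C : set E) (psi : E -> R) (y : E -> R) : \bar R :=
  ereal_sup ((fun x => (y x - psi x)%:E) @` C).

Definition bregman (C : set E) (psi : E -> R) (x : E) (y : E -> R) : \bar R :=
  ((psi x)%:E + fconj C psi y - (y x)%:E)%E.

Definition subdiff (C : set E) (psi : E -> R) (x : E) : set (E -> R) :=
  [set y | C x /\ dual_elt y /\ bregman C psi x y = 0%E].

(* subdifferential of the conjugate, as the inverse of subdiff:
   x in d psi^star(y^star)  <->  y^star in d psi(x) *)
Definition subdiff_conj (C : set E) (psi : E -> R) (y : E -> R) : set E :=
  [set x | subdiff C psi x y].

Definition eproper (g : E -> \bar R) : Prop :=
  (forall x, g x != -oo%E) /\ (exists x, g x != +oo%E).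

Definition econj (g : E -> \bar R) (y : E -> R) : \bar R :=
  ereal_sup ((fun x => ((y x)%:E - g x)%E) @` [set: E]).

Definition ebregman (g : E -> \bar R) (x : E) (y : E -> R) : \bar R :=
  (g x + econj g y - (y x)%:E)%E.

Definition esubdiff (g : E -> \bar R) (x : E) : set (E -> R) :=
  [set y | dual_elt y /\ ebregman g x y = 0%E].

Definition phi_conj (phi : R -> R) (s : R) : \bar R :=
  ereal_sup ((fun t => (s * t - phi t)%:E) @` [set t : R | 0 <= t]).

Definition admissible_phi (phi : R -> R) : Prop :=
  [/\ forall s t l : R, 0 <= s -> 0 <= t -> 0 <= l <= 1 ->
        phi (l * s + (1 - l) * t) <= l * phi s + (1 - l) * phi t,
      forall t : R, 0 <= t -> 0 <= phi t
    & phi 0 = 0].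

Definition phi_convex (C : set E) (psi : E -> R) (phi : R -> R) : Prop :=
  forall x, C x -> forall y ys, subdiff C psi y ys ->
    ((phi `|x - y|)%:E <= bregman C psi x ys)%E.

Definition convex_subset (C : set E) : Prop :=
  forall x y (l : R), C x -> C y -> 0 <= l <= 1 -> C (l *: x + (1 - l) *: y).

End Defs.

From mathcomp Require Import all_boot all_order all_algebra.
From mathcomp Require Import all_classical all_reals all_analysis.
From mathcomp Require Import ring lra.
Import Order.TTheory GRing.Theory Num.Theory.
Import numFieldNormedType.Exports.
Local Open Scope classical_set_scope.
Local Open Scope ring_scope.

(* Fix a round [t] and write [g := xtpsi t], [c := xcheck t.+1 = g - theta_t x_t^*]
   and [y := g - theta_t xhat_t], so that [x_t] lies in [subdiff psi^* y]. For [u]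
   in [C], phi-convexity of [psi] at [(x_t, y)], the bound
   [<x_t^* - xhat_t, x_t - u> <= ||x_t^* - xhat_t|| ||u - x_t||] and Fenchel-Young
   for [phi] give the optimistic step
     [psi^*(c) <= <c, x_t> - psi(x_t) + phi^*(theta_t ||x_t^* - xhat_t||)].
   Multiplied by [theta_t], the right-hand side of round [t] is the slack of this
   inequality plus [theta_t <x_t^*, x_t - z_t>] (the terms [psi^*(g)] and
   [psi(z_t)] cancel), and [<x_t^*, x_t - z_t>] bounds the loss difference by the
   subgradient inequality. Splitting the sums needs [psi^*] finite on [E^*]: this
   is immediate when [subdiff psi] is onto, and for compact [C] it follows from
   [psi >= psi(a) + <a^psi, . - a>]. *)

Section DualElements.
Set Implicit Arguments.
Context {R : realType} {E : normedModType R}.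
Implicit Types (f g : E -> R) (u v : E).

Lemma dual_elt0 f : dual_elt f -> f 0 = 0.
Proof.
by move=> [lin _]; have /eqP := lin 1 0 0; rewrite scale1r addr0 mul1r; lra.
Qed.

Lemma dual_eltZ f (c : R) v : dual_elt f -> f (c *: v) = c * f v.
Proof. by move=> df; have := df.1 c v 0; rewrite addr0 dual_elt0 // addr0. Qed.

Lemma dual_eltB f u v : dual_elt f -> f (u - v) = f u - f v.
Proof.
move=> df; have := df.1 (-1) v u; rewrite scaleN1r addrC => ->.
by rewrite mulN1r addrC.
Qed.

Lemma dual_elt_subZ f g (c : R) : dual_elt f -> dual_elt g -> dual_elt (f - c *: g).
Proof.
move=> df dg; split.
  by move=> k u v; rewrite !fctE df.1 dg.1 /GRing.scale /=; ring.
move=> u; apply: continuousB; first exact: df.2.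
exact: (continuousZ (s := fun=> c) (cvg_cst _) (dg.2 u)).
Qed.

Lemma dual_elt_sub f g : dual_elt f -> dual_elt g -> dual_elt (f - g).
Proof.
by move=> df dg; have := dual_elt_subZ 1 df dg; rewrite scale1r.
Qed.

Lemma dual_elt_bounded_unit_ball f : dual_elt f ->
  exists M, forall v, `|v| <= 1 -> `|f v| <= M.
Proof.
move=> df; have /cvgr_dist_lt/(_ 1 ltr01)/nbhs_ballP[d /= d0 fd1] := df.2 0.
rewrite dual_elt0 // in fd1.
have d20 : 0 < d / 2 by rewrite divr_gt0.
exists (2 / d) => v v1.
have : ball 0 d ((d / 2) *: v).
  rewrite -ball_normE /= sub0r normrN normrZ gtr0_norm //.
  apply: (le_lt_trans (ler_wpM2l (ltW d20) v1)).
  by rewrite mulr1 ltr_pdivrMr // ltr_pMr // ltr1n.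
move=> /fd1; rewrite sub0r normrN dual_eltZ // normrM gtr0_norm // => lt1.
rewrite -(ler_pM2l d20); apply: ltW; apply: (lt_le_trans lt1).
suff -> : d / 2 * (2 / d) = 1 by [].
by field; rewrite gt_eqF.
Qed.

Lemma dual_norm_ler f v : dual_elt f -> `|f v| <= dual_norm f * `|v|.
Proof.
move=> df; have [M fM] := dual_elt_bounded_unit_ball df.
have has_sup_f : has_sup ((fun x => `|f x|) @` [set x : E | `|x| <= 1]).
  split; first by exists `|f 0|, 0 => //=; rewrite normr0 ler01.
  by exists M => _ [y /= y1 <-]; exact: fM.
have [->|v0] := eqVneq v 0; first by rewrite dual_elt0 // !normr0 mulr0.
have nv : 0 < `|v| by rewrite normr_gt0.
have unit_v : [set x : E | `|x| <= 1] (`|v|^-1 *: v).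
  by rewrite /= normrZ normfV normr_id mulVf ?gt_eqF.
have := ub_le_sup has_sup_f.2 (ex_intro2 _ _ _ unit_v erefl).
by rewrite /= dual_eltZ // normrM normfV normr_id ler_pdivrMl // mulrC.
Qed.

End DualElements.

Lemma lee_sum_nat_addB (R : realDomainType) (m n : nat) (L a b c : nat -> \bar R) :
  (forall t, (m <= t < n)%N ->
     [/\ a t \is a fin_num, c t \is a fin_num & (L t <= a t + b t - c t)%E]) ->
  (\sum_(m <= t < n) L t <= \sum_(m <= t < n) a t + \sum_(m <= t < n) b t
     - \sum_(m <= t < n) c t)%E.
Proof.
move=> Lle.
have -> : (- \sum_(m <= t < n) c t = \sum_(m <= t < n) - c t)%E.
  by rewrite big_nat_cond [RHS]big_nat_cond fin_num_sumeN // => t /andP[/Lle[]].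
rewrite -!big_split /= big_nat_cond [leRHS]big_nat_cond.
by apply: lee_sum => t /andP[/Lle[]].
Qed.

Section Conjugates.
Set Implicit Arguments.
Context {R : realType} {E : normedModType R}.

Lemma phi_conj_ge0 (phi : R -> R) (s : R) :
  admissible_phi phi -> (0 <= phi_conj phi s)%E.
Proof.
by move=> [_ _ phi0]; apply: ereal_sup_ubound; exists 0; rewrite //= phi0 mulr0 subr0.
Qed.

Lemma esubdiff_sub_le (g : E -> \bar R) u v (s : E -> R) :
  eproper g -> esubdiff g u s -> (g u - g v <= (s u - s v)%:E)%E.
Proof.
(* [g w] finite keeps [econj g s] above [-oo], so the vanishing divergence
   forces [g u] and [econj g s] to be finite. *)
move=> [gN [w gw]] [_]; rewrite /ebregman.
have conj_v : ((s v)%:E - g v <= econj g s)%E by apply: ereal_sup_ubound; exists v.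
have conj_w : ((s w)%:E - g w <= econj g s)%E by apply: ereal_sup_ubound; exists w.
move: conj_v conj_w (gN v) (gN u) gw (gN w).
case: (econj g s) => [e||]; case: (g u) => [gu||]; case: (g v) => [gv||];
  case: (g w) => [gw'||] //=; rewrite ?leey ?leeNy ?lee_fin //=.
all: try (move=> *; discriminate).
all: try (by move=> *; rewrite ?leNye).
by move=> ? _ _ _ _ _ [] ?; lra.
Qed.

Variables (C : set E) (psi : E -> R).

Lemma fconj_ge u (y : E -> R) : C u -> ((y u - psi u)%:E <= fconj C psi y)%E.
Proof. by move=> Cu; apply: ereal_sup_ubound; exists u. Qed.

Lemma fconj_subdiff u (y : E -> R) :
  subdiff C psi u y -> fconj C psi y = (y u - psi u)%:E.
Proof.
move=> [_ [_]]; rewrite /bregman; case: (fconj C psi y) => [r||] //=.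
by move=> [] ?; congr EFin; lra.
Qed.

Lemma phi_convex_subdiff_ge phi u x (y : E -> R) :
  phi_convex C psi phi -> C u -> subdiff C psi x y ->
  phi `|u - x| <= psi u - psi x - (y u - y x).
Proof.
move=> pc Cu sdx; have := pc u Cu x y sdx.
by rewrite /bregman (fconj_subdiff sdx) -EFinD lee_fin; lra.
Qed.

Lemma fconj_optimistic_le phi x (g h s : E -> R) (th : R) :
  phi_convex C psi phi -> 0 < th -> dual_elt s -> dual_elt h ->
  subdiff C psi x (g - th *: h) ->
  (fconj C psi (g - th *: s)%R <=
    phi_conj phi (th * dual_norm (s - h)%R)%R + ((g - th *: s) x - psi x)%R%:E)%E.
Proof.
move=> pc th0 ds dh sdx; apply: ge_ereal_sup => _ [u Cu <-].
have := phi_convex_subdiff_ge pc Cu sdx; rewrite !fctE /GRing.scale /= => conv.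
have phi_u : ((th * dual_norm (s - h) * `|u - x| - phi `|u - x|)%R%:E <=
    phi_conj phi (th * dual_norm (s - h)%R)%R)%E.
  by apply: ereal_sup_ubound; exists `|u - x|; rewrite /= ?normr_ge0.
apply: le_trans (leeD2r _ phi_u); rewrite -EFinD lee_fin.
have dsh := dual_elt_sub ds dh.
have := dual_norm_ler (x - u) dsh; rewrite dual_eltB // (distrC x u).
set N := dual_norm _; rewrite !fctE => sh_bound.
by have := ler_wpM2l (ltW th0) (le_trans (ler_norm _) sh_bound); lra.
Qed.

Lemma fconj_fin_num phi a apsi (y : E -> R) :
  admissible_phi phi -> phi_convex C psi phi -> subdiff C psi a apsi ->
  ((forall y, dual_elt y -> exists2 w, C w & subdiff C psi w y) \/ compact C) ->
  dual_elt y -> fconj C psi y \is a fin_num.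
Proof.
move=> [_ phi_ge0 _] pc sda [subdiff_onto|cptC] dy.
  by have [w _ /fconj_subdiff ->] := subdiff_onto y dy.
have /continuous_subspaceT/continuous_compact/(_ cptC) := (dual_elt_sub dy sda.2.1).2.
move=> /compact_bounded/pinfty_ex_gt0[M _ bound_M].
have ub : (fconj C psi y <= (M + (apsi a - psi a))%:E)%E.
  apply: ge_ereal_sup => _ [u Cu <-]; rewrite lee_fin.
  have := phi_convex_subdiff_ge pc Cu sda.
  have := phi_ge0 _ (normr_ge0 (u - a)).
  have : `|(y - apsi) u| <= M by apply: bound_M; exists u.
  by rewrite !fctE => /(le_trans (ler_norm _)); lra.
by move: ub (fconj_ge y sda.1); case: (fconj C psi y).
Qed.

Lemma bregman_fin_numE u (y : E -> R) :
  (bregman C psi u y \is a fin_num) = (fconj C psi y \is a fin_num).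
Proof. by rewrite /bregman fin_numB fin_numD andbT. Qed.

Lemma optimistic_round_le phi x z (g h s : E -> R) (th : R) (Lx Lz : \bar R) :
  admissible_phi phi -> phi_convex C psi phi -> 0 < th ->
  dual_elt s -> dual_elt h -> subdiff C psi x (g - th *: h) ->
  fconj C psi g \is a fin_num -> fconj C psi (g - th *: s)%R \is a fin_num ->
  (Lx - Lz <= (s x - s z)%R%:E)%E ->
  (Lx - Lz <= (th^-1)%:E * (bregman C psi z g - bregman C psi z (g - th *: s)%R)
     + (th^-1)%:E * phi_conj phi (th * dual_norm (s - h)%R)%R
     - (th^-1)%:E * bregman C psi x g)%E.
Proof.
move=> adm pc th0 ds dh sdx fg fc loss_le.
have := fconj_optimistic_le pc th0 ds dh sdx.
have := phi_conj_ge0 (th * dual_norm (s - h)) adm.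
rewrite /bregman -(fineK fg) -(fineK fc).
case: (phi_conj _ _) => [r | | ] //= _.
  rewrite -!EFinD lee_fin => step.
  apply: (le_trans loss_le); rewrite lee_fin !fctE /GRing.scale /= in step *.
  rewrite -mulrDr -mulrBr ler_pdivlMl //; lra.
rewrite mulry gtr0_sg ?invr_gt0 // mul1e /= => _.
by rewrite -!EFinD -EFinM addey // addye // leey.
Qed.

End Conjugates.

Theorem proposition1 (R : realType) (E : normedModType R)
  (C : set E) (psi : E -> R) (phi : R -> R)
  (a : E) (apsi : E -> R) (T : nat) (theta : nat -> R)
  (loss : nat -> E -> \bar R)
  (x : nat -> E) (xs : nat -> E -> R) (xhat : nat -> E -> R)
  (xt : nat -> E) (xtpsi : nat -> E -> R) (xcheck : nat -> E -> R)
  (z : nat -> E) :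
  C !=set0 -> closed C -> convex_subset C ->
  admissible_phi phi -> phi_convex C psi phi ->
  ((forall y, dual_elt y -> exists2 w, C w & subdiff C psi w y) \/ compact C) ->
  C a -> subdiff C psi a apsi ->
  (forall t, (1 <= t <= T)%N -> 0 < theta t) ->
  (* the adversary's losses *)
  (forall t, (1 <= t <= T)%N -> eproper (loss t)) ->
  (forall t, (1 <= t <= T)%N -> forall w, C w -> exists ws, esubdiff (loss t) w ws) ->
  (forall t, (1 <= t <= T)%N -> esubdiff (loss t) (x t) (xs t)) ->
  (forall t, (1 <= t <= T)%N -> dual_elt (xhat t)) ->
  (* strategy S-II *)
  xtpsi 1%N = apsi ->
  (forall t, (2 <= t <= T.+1)%N ->
     xcheck t = xtpsi t.-1 - theta t.-1 *: xs t.-1) ->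
  (forall t, (2 <= t <= T)%N -> subdiff_conj C psi (xcheck t) (xt t)) ->
  (forall t, (2 <= t <= T)%N -> subdiff C psi (xt t) (xtpsi t)) ->
  (forall t, (1 <= t <= T)%N ->
     subdiff_conj C psi (xtpsi t - theta t *: xhat t) (x t)) ->
  (* comparators *)
  (forall t, (1 <= t <= T)%N -> C (z t)) ->
  (\sum_(1 <= t < T.+1) (loss t (x t) - loss t (z t))
   <= \sum_(1 <= t < T.+1) ((theta t)^-1)%:E *
          (bregman C psi (z t) (xtpsi t) - bregman C psi (z t) (xcheck t.+1))
    + \sum_(1 <= t < T.+1) ((theta t)^-1)%:E *
          phi_conj phi ((theta t)%R * dual_norm (xs t - xhat t)%R)
    - \sum_(1 <= t < T.+1) ((theta t)^-1)%:E * bregman C psi (x t) (xtpsi t))%E.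
Proof.
move=> _ _ _ adm pc onto_or_cpt _ sda th0 proper_loss _ xs_sub xhat_dual
  xtpsi1 xcheck_def _ xtpsi_sub x_sub _.
apply: lee_sum_nat_addB => t ht; have /andP[t_ge1 t_leT] := ht.
have [dg fg] : dual_elt (xtpsi t) /\ fconj C psi (xtpsi t) \is a fin_num.
  have [u sdu] : exists u, subdiff C psi u (xtpsi t).
    have [t_gt1|t_le1] := ltnP 1 t.
      by exists (xt t); apply: xtpsi_sub; rewrite t_gt1.
    by exists a; rewrite (_ : t = 1%N) ?xtpsi1 //; apply/eqP; rewrite eqn_leq t_le1.
  by rewrite (fconj_subdiff sdu); split; first exact: sdu.2.1.
have ds : dual_elt (xs t) := (xs_sub t ht).1.
have fc := fconj_fin_num adm pc sda onto_or_cpt (dual_elt_subZ (theta t) dg ds).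
rewrite xcheck_def //=; split.
- by rewrite fin_numM // fin_numB !bregman_fin_numE fg fc.
- by rewrite fin_numM // bregman_fin_numE.
- apply: optimistic_round_le adm pc (th0 t ht) ds (xhat_dual t ht) (x_sub t ht) fg fc _.
  exact: esubdiff_sub_le (proper_loss t ht) (xs_sub t ht).
Qed.
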